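(* Every reduced $2$-Segal set is equivalent to the simplicial set $\mathrm{ob}\,S^{\square}_\bullet\mathbb{C}$ for some squares category $\mathbb{C}$.
   Context: A squares category is a flat double category (squares uniquely determined by their boundary; we say a boundary ''is a square'') with a distinguished object $O$ initial in the horizontal category (morphisms $\rightarrowtail$) and terminal in the vertical category (morphisms $\twoheadrightarrow$). $\mathrm{ob}\,S^{\square}_n\mathbb{C}$ is the set of families $(A_{jk})_{0\le j\le k\le n}$ of objects with $A_{jj}=O$, horizontal morphisms $A_{jk}\rightarrowtail A_{j,k+1}$ and vertical morphisms $A_{jk}\twoheadrightarrow A_{j+1,k}$ ($j<k$) such that each unit cell with corners $A_{jk},A_{j,k+1},A_{j+1,k},A_{j+1,k+1}$ ($j<k<n$) is a square; for $\theta:[m]\to[n]$ the simplicial operator sends $(A_{jk})$ to $(A_{\theta(j)\theta(k)})$ with the composite morphisms. A $2$-Segal set is a simplicial set $X$ such that for every $n\ge3$ and $0\le i<j\le n$ the square with vertices $X_n$, $X_{\{i,\dots,j\}}$, $X_{\{0,\dots,i,j,\dots,n\}}$, $X_{\{i,j\}}$ (maps induced by the inclusions of these subsets of $[n]$) is a pullback. It is reduced if $X_0$ is a single point. *)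

From mathcomp Require Import all_boot.
Set Implicit Arguments. Unset Strict Implicit. Unset Printing Implicit Defensive.

(* The simplex category: [n] = 'I_n.+1, morphisms = monotone maps. *)
Definition monotone (m n : nat) (f : 'I_m.+1 -> 'I_n.+1) : Prop :=
  forall i j : 'I_m.+1, (i <= j)%N -> (f i <= f j)%N.

(* A simplicial set: sets X_n with a contravariant action of monotone maps.
   The action is given on all maps but the functor laws (and hence all the
   structure) only concern monotone maps. *)
Record sSet := SSet {
  sX :> nat -> Type;
  sact : forall m n : nat, ('I_m.+1 -> 'I_n.+1) -> sX n -> sX m;
  sact_id : forall n (x : sX n), sact (fun t => t) x = x;
  sact_comp : forall k m n (f : 'I_k.+1 -> 'I_m.+1) (g : 'I_m.+1 -> 'I_n.+1),
      monotone f -> monotone g ->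
      forall x : sX n, sact (fun t => g (f t)) x = sact f (sact g x)
}.
Arguments sact s {m n} f x.

(* {i,...,j} -> [n]   (domain [j - i]) *)
Definition seg_mid (n i j : nat) : 'I_(j - i).+1 -> 'I_n.+1 :=
  fun t => inord (i + t).
(* {0,...,i,j,...,n} -> [n]   (domain [n - (j - i) + 1]) *)
Definition seg_out (n i j : nat) : 'I_(n - (j - i) + 1).+1 -> 'I_n.+1 :=
  fun t => inord (if (t <= i)%N then nat_of_ord t else (t + (j - i) - 1)%N).
(* {i,j} as a subset of {i,...,j} *)
Definition edge_mid (i j : nat) : 'I_2 -> 'I_(j - i).+1 :=
  fun t => inord (t * (j - i)).
(* {i,j} as a subset of {0,...,i,j,...,n} *)
Definition edge_out (n i j : nat) : 'I_2 -> 'I_(n - (j - i) + 1).+1 :=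
  fun t => inord (i + t).
Arguments seg_mid : clear implicits.
Arguments seg_out : clear implicits.
Arguments edge_mid : clear implicits.
Arguments edge_out : clear implicits.

(* The 2-Segal square is a pullback (of sets): the canonical map
   X_n -> X_{i..j} x_{X_{i,j}} X_{0..i,j..n} is bijective. *)
Definition two_segal (X : sSet) : Prop :=
  forall n i j : nat, (3 <= n)%N -> (i < j)%N -> (j <= n)%N ->
    forall (y1 : X (j - i)) (y2 : X (n - (j - i) + 1)),
      sact X (edge_mid i j) y1 = sact X (edge_out n i j) y2 ->
      exists! x : X n, sact X (seg_mid n i j) x = y1 /\ sact X (seg_out n i j) x = y2.

Definition reduced (X : sSet) : Prop := exists x : X 0, forall y : X 0, y = x.

(* A flat double category (single-sorted presentation of the horizontal and
   vertical categories on a common object type; squares are a predicate on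
   boundaries: Sq top bottom left right), with a distinguished object O that is
   initial in the horizontal and terminal in the vertical category.
   hcomp f g / vcomp f g = "f then g". *)
Record squares_category := SquaresCat {
  Ob : Type;
  Hm : Type; hsrc : Hm -> Ob; htgt : Hm -> Ob; hid : Ob -> Hm; hcomp : Hm -> Hm -> Hm;
  Vm : Type; vsrc : Vm -> Ob; vtgt : Vm -> Ob; vid : Ob -> Vm; vcomp : Vm -> Vm -> Vm;
  Sq : Hm -> Hm -> Vm -> Vm -> Prop;
  O : Ob;
  hid_src : forall a, hsrc (hid a) = a;
  hid_tgt : forall a, htgt (hid a) = a;
  hcomp_src : forall f g, htgt f = hsrc g -> hsrc (hcomp f g) = hsrc f;
  hcomp_tgt : forall f g, htgt f = hsrc g -> htgt (hcomp f g) = htgt g;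
  hcomp_idl : forall f, hcomp (hid (hsrc f)) f = f;
  hcomp_idr : forall f, hcomp f (hid (htgt f)) = f;
  hcomp_assoc : forall f g h, htgt f = hsrc g -> htgt g = hsrc h ->
      hcomp (hcomp f g) h = hcomp f (hcomp g h);
  vid_src : forall a, vsrc (vid a) = a;
  vid_tgt : forall a, vtgt (vid a) = a;
  vcomp_src : forall f g, vtgt f = vsrc g -> vsrc (vcomp f g) = vsrc f;
  vcomp_tgt : forall f g, vtgt f = vsrc g -> vtgt (vcomp f g) = vtgt g;
  vcomp_idl : forall f, vcomp (vid (vsrc f)) f = f;
  vcomp_idr : forall f, vcomp f (vid (vtgt f)) = f;
  vcomp_assoc : forall f g h, vtgt f = vsrc g -> vtgt g = vsrc h ->
      vcomp (vcomp f g) h = vcomp f (vcomp g h);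
  Sq_boundary : forall t b l r, Sq t b l r ->
      [/\ hsrc t = vsrc l, htgt t = vsrc r, hsrc b = vtgt l & htgt b = vtgt r];
  Sq_hid : forall v, Sq (hid (vsrc v)) (hid (vtgt v)) v v;
  Sq_vid : forall f, Sq f f (vid (hsrc f)) (vid (htgt f));
  Sq_hcomp : forall t b l r t' b' r', Sq t b l r -> Sq t' b' r r' ->
      Sq (hcomp t t') (hcomp b b') l r';
  Sq_vcomp : forall t m b l r l' r', Sq t m l r -> Sq m b l' r' ->
      Sq t b (vcomp l l') (vcomp r r');
  O_hinitial : forall a, exists f, [/\ hsrc f = O, htgt f = a &
      forall g, hsrc g = O -> htgt g = a -> g = f];
  O_vterminal : forall a, exists v, [/\ vsrc v = a, vtgt v = O &
      forall w, vsrc w = a -> vtgt w = O -> w = v]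
}.

(* Raw data of a family: objects A_{jk}, horizontal maps A_{jk} >-> A_{j,k+1},
   vertical maps A_{jk} ->> A_{j+1,k}; entries outside the index range are
   forced to canonical values by sq_valid, so valid raw data correspond
   bijectively to the families of the paper. *)
Record SqRaw (C : squares_category) := MkSqRaw {
  sobj : nat -> nat -> Ob C;
  shor : nat -> nat -> Hm C;
  sver : nat -> nat -> Vm C
}.

Definition sq_valid (C : squares_category) (n : nat) (A : SqRaw C) : Prop :=
  [/\ ((* A_{jj} = O, and canonical value outside 0 <= j < k <= n *)
      (forall j k, ~~ ((j < k) && (k <= n))%N -> sobj A j k = O C) /\
      (forall j k, ((j <= k) && (k < n))%N ->
         hsrc (shor A j k) = sobj A j k /\ htgt (shor A j k) = sobj A j k.+1)),
      (forall j k, ~~ ((j <= k) && (k < n))%N -> shor A j k = hid (O C)),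
      (forall j k, ((j < k) && (k <= n))%N ->
         vsrc (sver A j k) = sobj A j k /\ vtgt (sver A j k) = sobj A j.+1 k),
      (forall j k, ~~ ((j < k) && (k <= n))%N -> sver A j k = vid (O C))
    &
      (forall j k, ((j < k) && (k < n))%N ->
         Sq (shor A j k) (shor A j.+1 k) (sver A j k) (sver A j k.+1))].

Fixpoint hpath (C : squares_category) (h : nat -> Hm C) (start : Ob C) (b d : nat) : Hm C :=
  match d with
  | 0 => hid start
  | d'.+1 => hcomp (hpath h start b d') (h (b + d')%N)
  end.

Fixpoint vpath (C : squares_category) (v : nat -> Vm C) (start : Ob C) (a d : nat) : Vm C :=
  match d with
  | 0 => vid start
  | d'.+1 => vcomp (vpath v start a d') (v (a + d')%N)
  end.

(* simplicial operator theta : [m] -> [n] (given by its values on 0..m) *)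
Definition sq_act (C : squares_category) (theta : nat -> nat) (m : nat) (A : SqRaw C)
  : SqRaw C :=
  {| sobj := fun j k => if ((j < k) && (k <= m))%N then sobj A (theta j) (theta k) else O C;
     shor := fun j k => if ((j <= k) && (k < m))%N then
               hpath (shor A (theta j)) (sobj A (theta j) (theta k))
                     (theta k) (theta k.+1 - theta k)
             else hid (O C);
     sver := fun j k => if ((j < k) && (k <= m))%N then
               vpath (fun a => sver A a (theta k)) (sobj A (theta j) (theta k))
                     (theta j) (theta j.+1 - theta j)
             else vid (O C) |}.

Definition ord_fun (m n : nat) (f : 'I_m.+1 -> 'I_n.+1) : nat -> nat :=
  fun t => nat_of_ord (f (inord t)).

(* X is isomorphic (as a simplicial set) to ob S^square_. C, via levelwise maps
   phi_n that are injective with image exactly ob S^square_n C and that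
   commute with all simplicial operators. *)
Definition iso_to_SqCat (X : sSet) (C : squares_category) : Prop :=
  exists phi : forall n, X n -> SqRaw C,
    [/\ (forall n, injective (phi n)),
        (forall n (A : SqRaw C), sq_valid n A <-> exists x : X n, phi n x = A)
      & (forall m n (theta : 'I_m.+1 -> 'I_n.+1), monotone theta ->
           forall x : X n, phi m (sact X theta x) = sq_act (ord_fun theta) m (phi n x))].

From mathcomp Require Import all_boot zify.
From Stdlib Require Import FunctionalExtensionality ClassicalEpsilon.
Set Implicit Arguments. Unset Strict Implicit. Unset Printing Implicit Defensive.

(* A reduced 2-Segal set X carries a squares category: its objects are the
   1-simplices, O is the degenerate edge on the unique vertex, a 2-simplex x is
   both a horizontal morphism d_2 x >-> d_1 x and a vertical morphism
   d_1 x ->> d_0 x, and squares are the boundaries of 3-simplices.  Two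
   composable 2-simplices span a unique 3-simplex by the 2-Segal condition, and
   its remaining face is their composite.
   An n-simplex is sent to the family of its edges and of its 2-simplices on the
   vertices (j, k, k+1) and (j, j+1, k).  The 2-Segal condition for the
   decomposition of [n+1] into {0..n} and {0, n, n+1} shows, by induction on n,
   that a simplex is determined by its family and that every family arises:
   the new column on the vertices (j, n+1, n+2) is filled in square by square,
   a square being determined by its top and left sides. *)

Definition nat_mono (m n : nat) (f : nat -> nat) : Prop :=
  (forall s t, s <= t -> t <= m -> f s <= f t) /\ f m <= n.

Definition vx (s : seq nat) : nat -> nat := nth 0 s.

Lemma nat_mono_vx s m n :
  size s = m.+1 -> sorted leq s -> nth 0 s m <= n -> nat_mono m n (vx s).
Proof.
move=> sz srt sn; split=> // a b ab bm.
by apply: (sorted_leq_nth leq_trans leqnn); rewrite ?inE ?sz ?ltnS //; lia.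
Qed.

Lemma nat_mono_id m n : m <= n -> nat_mono m n id.
Proof. by move=> mn; split=> // s t st _. Qed.

Lemma nat_mono_shift m n c : m + c <= n -> nat_mono m n (fun t => c + t).
Proof. by move=> mcn; split=> [s t st _|]; lia. Qed.

Lemma nat_mono_const m n c : c <= n -> nat_mono m n (fun=> c).
Proof. by move=> mn; split=> // s t st _. Qed.

Lemma nat_mono_ord_fun m n (theta : 'I_m.+1 -> 'I_n.+1) :
  monotone theta -> nat_mono m n (ord_fun theta).
Proof.
move=> mono_theta; split=> [s t st tm|]; last by rewrite /ord_fun -ltnS.
by apply: mono_theta; rewrite !inordK //; lia.
Qed.

Lemma nat_mono_monotone m n f :
  nat_mono m n f -> monotone (fun t : 'I_m.+1 => inord (f t) : 'I_n.+1).
Proof.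
move=> [mono_f fm] i j ij.
have bound (t : 'I_m.+1) : f t < n.+1.
  by rewrite ltnS; apply: leq_trans (mono_f t m (ltn_ord t) (leqnn m)) fm.
by rewrite !inordK ?bound //; apply: mono_f; last exact: ltn_ord j.
Qed.

Ltac nat_mono_tac :=
  first [ assumption
        | apply: nat_mono_vx; [reflexivity | rewrite /=; lia | rewrite /=; lia]
        | apply: nat_mono_id; lia
        | apply: nat_mono_shift; lia
        | apply: nat_mono_const; lia ].

Section Simplicial.
Variable X : sSet.

Definition simop n m (f : nat -> nat) (x : X n) : X m :=
  sact X (fun t : 'I_m.+1 => inord (f t) : 'I_n.+1) x.
Arguments simop {n} m f x.

Lemma simop_ext n m f g (x : X n) :
  (forall t, t <= m -> f t = g t) -> simop m f x = simop m g x.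
Proof.
move=> fg; congr (sact X _ x); apply: functional_extensionality => t.
by rewrite fg // -ltnS.
Qed.

Lemma simop_id n (x : X n) : simop n id x = x.
Proof.
rewrite -[RHS](sact_id x); congr (sact X _ x).
by apply: functional_extensionality => t; exact: inord_val.
Qed.

Lemma simop_comp n k m f g (x : X n) : nat_mono m k f -> nat_mono k n g ->
  simop m f (simop k g x) = simop m (fun t => g (f t)) x.
Proof.
move=> mono_f mono_g; rewrite /simop -sact_comp; try exact: nat_mono_monotone.
congr (sact X _ x); apply: functional_extensionality => t.
case: mono_f => mono_f fm.
by rewrite inordK // ltnS; apply: leq_trans (mono_f t m (ltn_ord t) (leqnn m)) fm.
Qed.

Lemma sact_simop m n (theta : 'I_m.+1 -> 'I_n.+1) (x : X n) :
  sact X theta x = simop m (ord_fun theta) x.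
Proof.
congr (sact X _ x); apply: functional_extensionality => t.
by rewrite /ord_fun !inord_val.
Qed.

(* Simplicial operators below have target dimension at most 3. *)
Ltac pointwise_tac :=
  let t := fresh "t" in let Ht := fresh "Ht" in
  move=> t Ht; do 4? (case: t Ht => [|t] Ht; first by rewrite /vx /=; lia); lia.

Ltac simop_eq :=
  rewrite ?simop_comp; try nat_mono_tac;
  first [ apply: simop_ext; pointwise_tac
        | rewrite -[RHS]simop_id; apply: simop_ext; pointwise_tac
        | rewrite -[LHS]simop_id; apply: simop_ext; pointwise_tac ].

Section TwoSegal.
Hypothesis segX : two_segal X.

(* [d] and [e] come with equations since [X (n - 0)] is not convertible to [X n]. *)
Lemma two_segal_simop N i j d e f g (y1 : X d) (y2 : X e) :
  3 <= N -> i < j <= N -> d = j - i -> e = N - d + 1 ->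
  (forall t, t <= d -> f t = i + t) ->
  (forall t, t <= e -> g t = if t <= i then t else t + d - 1) ->
  simop 1 (vx [:: 0; d]) y1 = simop 1 (vx [:: i; i.+1]) y2 ->
  exists! x : X N, simop d f x = y1 /\ simop e g x = y2.
Proof.
move=> N3 /andP[ij jN] Ed Ee Ef Eg compat; subst d e.
have edge_midE : edge_mid i j = fun t => inord (vx [:: 0; j - i] t).
  by apply: functional_extensionality => -[[|[|t]] ?] //; rewrite /edge_mid /= mul1n.
have edge_outE : edge_out N i j = fun t => inord (vx [:: i; i.+1] t).
  by apply: functional_extensionality => -[[|[|t]] ?] //; rewrite /edge_out /= ?addn0 ?addn1.
have [x [Px x_uniq]] := segX N3 ij jN (y1 := y1) (y2 := y2)
  ltac:(by rewrite edge_midE edge_outE).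
have midE x' : sact X (seg_mid N i j) x' = simop (j - i) f x' by exact: esym (simop_ext _ Ef).
have outE x' : sact X (seg_out N i j) x' = simop _ g x' by exact: esym (simop_ext _ Eg).
by exists x; split=> [|x' Px']; [rewrite -midE -outE | apply: x_uniq; rewrite midE outE].
Qed.

Lemma glue_last n (y : X n) (z : X 2) : 0 < n ->
  simop 1 (vx [:: 0; n]) y = simop 1 (vx [:: 0; 1]) z ->
  exists! x : X n.+1, simop n id x = y /\ simop 2 (vx [:: 0; n; n.+1]) x = z.
Proof.
move=> n0 compat; case: (ltnP 1 n) => n2.
  apply: (two_segal_simop (i := 0) (j := n)) => //; try lia.
  by move=> [|[|[|t]]] //=; lia.
have n1 : n = 1 by lia.
subst n; exists z; split=> [|x [_ <-]]; last by simop_eq.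
split; last by simop_eq.
by transitivity (simop 1 (vx [:: 0; 1]) z); [| rewrite -compat]; simop_eq.
Qed.

Lemma glue_first n (y : X n) (z : X 2) : 0 < n ->
  simop 1 (vx [:: 0; n]) y = simop 1 (vx [:: 1; 2]) z ->
  exists! x : X n.+1, simop n (fun t => 1 + t) x = y /\ simop 2 (vx [:: 0; 1; n.+1]) x = z.
Proof.
move=> n0 compat; case: (ltnP 1 n) => n2.
  apply: (two_segal_simop (i := 1) (j := n.+1)) => //; try lia.
  by move=> [|[|[|t]]] //=; lia.
have n1 : n = 1 by lia.
subst n; exists z; split=> [|x [_ <-]]; last by simop_eq.
split; last by simop_eq.
by transitivity (simop 1 (vx [:: 1; 2]) z); [| rewrite -compat]; simop_eq.
Qed.

Lemma glue_last_inj n (x x' : X n.+1) : 0 < n ->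
  simop n id x = simop n id x' ->
  simop 2 (vx [:: 0; n; n.+1]) x = simop 2 (vx [:: 0; n; n.+1]) x' -> x = x'.
Proof.
move=> n0 E1 E2.
have compat : simop 1 (vx [:: 0; n]) (simop n id x) =
              simop 1 (vx [:: 0; 1]) (simop 2 (vx [:: 0; n; n.+1]) x) by simop_eq.
have [x0 [_ x0_uniq]] := glue_last n0 compat.
have <- := x0_uniq x (conj erefl erefl).
exact: x0_uniq x' (conj (esym E1) (esym E2)).
Qed.

Lemma glue_first_inj n (x x' : X n.+1) : 0 < n ->
  simop n (fun t => 1 + t) x = simop n (fun t => 1 + t) x' ->
  simop 2 (vx [:: 0; 1; n.+1]) x = simop 2 (vx [:: 0; 1; n.+1]) x' -> x = x'.
Proof.
move=> n0 E1 E2.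
have compat : simop 1 (vx [:: 0; n]) (simop n (fun t => 1 + t) x) =
              simop 1 (vx [:: 1; 2]) (simop 2 (vx [:: 0; 1; n.+1]) x) by simop_eq.
have [x0 [_ x0_uniq]] := glue_first n0 compat.
have <- := x0_uniq x (conj erefl erefl).
exact: x0_uniq x' (conj (esym E1) (esym E2)).
Qed.

Lemma simplex3_hglue (f g : X 2) :
  simop 1 (vx [:: 0; 2]) f = simop 1 (vx [:: 0; 1]) g ->
  exists w : X 3, simop 2 (vx [:: 0; 1; 2]) w = f /\ simop 2 (vx [:: 0; 2; 3]) w = g.
Proof.
case/(glue_last (ltn0Sn 1)) => w [[Ef Eg] _].
by exists w; split=> //; rewrite -Ef; simop_eq.
Qed.

Lemma simplex3_vglue (f g : X 2) :
  simop 1 (vx [:: 1; 2]) f = simop 1 (vx [:: 0; 2]) g ->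
  exists w : X 3, simop 2 (vx [:: 0; 1; 3]) w = f /\ simop 2 (vx [:: 1; 2; 3]) w = g.
Proof.
move/esym; case/(glue_first (ltn0Sn 1)) => w [[Eg Ef] _].
by exists w; split=> //; rewrite -Eg; simop_eq.
Qed.

Lemma simplex3_eq_h (w w' : X 3) :
  simop 2 (vx [:: 0; 1; 2]) w = simop 2 (vx [:: 0; 1; 2]) w' ->
  simop 2 (vx [:: 0; 2; 3]) w = simop 2 (vx [:: 0; 2; 3]) w' -> w = w'.
Proof.
move=> E1; apply: glue_last_inj => //.
have restrE (v : X 3) : simop 2 id v = simop 2 (vx [:: 0; 1; 2]) v by simop_eq.
by rewrite !restrE.
Qed.

Lemma simplex3_eq_v (w w' : X 3) :
  simop 2 (vx [:: 1; 2; 3]) w = simop 2 (vx [:: 1; 2; 3]) w' ->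
  simop 2 (vx [:: 0; 1; 3]) w = simop 2 (vx [:: 0; 1; 3]) w' -> w = w'.
Proof.
move=> E1; apply: glue_first_inj => //.
have restrE (v : X 3) : simop 2 (fun t => 1 + t) v = simop 2 (vx [:: 1; 2; 3]) v by simop_eq.
by rewrite !restrE.
Qed.

Section SquaresCategory.
Variable pt : X 0.
Hypothesis pt_unique : forall y : X 0, y = pt.

Definition scO : X 1 := simop 1 (fun=> 0) pt.

Lemma simop_const_edge n (x : X n) f c : c <= n ->
  (forall t, t <= 1 -> f t = c) -> simop 1 f x = scO.
Proof.
move=> cn fc; rewrite /scO -(pt_unique (simop 0 (fun=> c) x)) simop_comp; try nat_mono_tac.
exact: simop_ext.
Qed.

Definition sc_hsrc (f : X 2) : X 1 := simop 1 (vx [:: 0; 1]) f.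
Definition sc_htgt (f : X 2) : X 1 := simop 1 (vx [:: 0; 2]) f.
Definition sc_hid (a : X 1) : X 2 := simop 2 (vx [:: 0; 1; 1]) a.
Definition sc_vsrc (f : X 2) : X 1 := simop 1 (vx [:: 0; 2]) f.
Definition sc_vtgt (f : X 2) : X 1 := simop 1 (vx [:: 1; 2]) f.
Definition sc_vid (a : X 1) : X 2 := simop 2 (vx [:: 0; 0; 1]) a.

Let inhabited3 : inhabited (X 3) := inhabits (simop 3 (fun=> 0) pt).

(* For non-composable [f] and [g] the composite is an arbitrary 2-simplex. *)
Definition sc_hcomp (f g : X 2) : X 2 := simop 2 (vx [:: 0; 1; 3]) (epsilon inhabited3
  (fun w => simop 2 (vx [:: 0; 1; 2]) w = f /\ simop 2 (vx [:: 0; 2; 3]) w = g)).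
Definition sc_vcomp (f g : X 2) : X 2 := simop 2 (vx [:: 0; 2; 3]) (epsilon inhabited3
  (fun w => simop 2 (vx [:: 0; 1; 3]) w = f /\ simop 2 (vx [:: 1; 2; 3]) w = g)).

Definition sc_Sq (t b l r : X 2) : Prop := exists w : X 3,
  [/\ simop 2 (vx [:: 0; 2; 3]) w = t, simop 2 (vx [:: 1; 2; 3]) w = b,
      simop 2 (vx [:: 0; 1; 2]) w = l & simop 2 (vx [:: 0; 1; 3]) w = r].

Lemma sc_hcomp_spec f g (w : X 3) :
  simop 2 (vx [:: 0; 1; 2]) w = f -> simop 2 (vx [:: 0; 2; 3]) w = g ->
  sc_hcomp f g = simop 2 (vx [:: 0; 1; 3]) w.
Proof.
move=> Ef Eg; rewrite /sc_hcomp; set P := fun _ => _.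
have [] : P (epsilon inhabited3 P) by apply: epsilon_spec; exists w.
by rewrite -Ef -Eg => E1 E2; rewrite (simplex3_eq_h E1 E2).
Qed.

Lemma sc_vcomp_spec f g (w : X 3) :
  simop 2 (vx [:: 0; 1; 3]) w = f -> simop 2 (vx [:: 1; 2; 3]) w = g ->
  sc_vcomp f g = simop 2 (vx [:: 0; 2; 3]) w.
Proof.
move=> Ef Eg; rewrite /sc_vcomp; set P := fun _ => _.
have [] : P (epsilon inhabited3 P) by apply: epsilon_spec; exists w.
by rewrite -Ef -Eg => E1 E2; rewrite (simplex3_eq_v E2 E1).
Qed.

Lemma sc_hcomp_simop n (u : X n) a b c d : a <= b -> b <= c -> c <= d -> d <= n ->
  sc_hcomp (simop 2 (vx [:: a; b; c]) u) (simop 2 (vx [:: a; c; d]) u) =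
  simop 2 (vx [:: a; b; d]) u.
Proof. by move=> *; rewrite (@sc_hcomp_spec _ _ (simop 3 (vx [:: a; b; c; d]) u)); simop_eq. Qed.

Lemma sc_vcomp_simop n (u : X n) a b c d : a <= b -> b <= c -> c <= d -> d <= n ->
  sc_vcomp (simop 2 (vx [:: a; b; d]) u) (simop 2 (vx [:: b; c; d]) u) =
  simop 2 (vx [:: a; c; d]) u.
Proof. by move=> *; rewrite (@sc_vcomp_spec _ _ (simop 3 (vx [:: a; b; c; d]) u)); simop_eq. Qed.

Ltac sc_eq := rewrite /= /sc_hsrc /sc_htgt /sc_hid /sc_vsrc /sc_vtgt /sc_vid; simop_eq.

Lemma sc_hid_src a : sc_hsrc (sc_hid a) = a. Proof. by sc_eq. Qed.
Lemma sc_hid_tgt a : sc_htgt (sc_hid a) = a. Proof. by sc_eq. Qed.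
Lemma sc_vid_src a : sc_vsrc (sc_vid a) = a. Proof. by sc_eq. Qed.
Lemma sc_vid_tgt a : sc_vtgt (sc_vid a) = a. Proof. by sc_eq. Qed.

Lemma sc_hcomp_src f g : sc_htgt f = sc_hsrc g -> sc_hsrc (sc_hcomp f g) = sc_hsrc f.
Proof.
case/(simplex3_hglue) => w [Ef Eg].
by rewrite (sc_hcomp_spec Ef Eg) -Ef; sc_eq.
Qed.

Lemma sc_hcomp_tgt f g : sc_htgt f = sc_hsrc g -> sc_htgt (sc_hcomp f g) = sc_htgt g.
Proof.
case/(simplex3_hglue) => w [Ef Eg].
by rewrite (sc_hcomp_spec Ef Eg) -Eg; sc_eq.
Qed.

Lemma sc_vcomp_src f g : sc_vtgt f = sc_vsrc g -> sc_vsrc (sc_vcomp f g) = sc_vsrc f.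
Proof.
case/(simplex3_vglue) => w [Ef Eg].
by rewrite (sc_vcomp_spec Ef Eg) -Ef; sc_eq.
Qed.

Lemma sc_vcomp_tgt f g : sc_vtgt f = sc_vsrc g -> sc_vtgt (sc_vcomp f g) = sc_vtgt g.
Proof.
case/(simplex3_vglue) => w [Ef Eg].
by rewrite (sc_vcomp_spec Ef Eg) -Eg; sc_eq.
Qed.

Lemma sc_hcomp_idl f : sc_hcomp (sc_hid (sc_hsrc f)) f = f.
Proof. by rewrite (@sc_hcomp_spec _ _ (simop 3 (vx [:: 0; 1; 1; 2]) f)); sc_eq. Qed.

Lemma sc_hcomp_idr f : sc_hcomp f (sc_hid (sc_htgt f)) = f.
Proof. by rewrite (@sc_hcomp_spec _ _ (simop 3 (vx [:: 0; 1; 2; 2]) f)); sc_eq. Qed.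

Lemma sc_vcomp_idl f : sc_vcomp (sc_vid (sc_vsrc f)) f = f.
Proof. by rewrite (@sc_vcomp_spec _ _ (simop 3 (vx [:: 0; 0; 1; 2]) f)); sc_eq. Qed.

Lemma sc_vcomp_idr f : sc_vcomp f (sc_vid (sc_vtgt f)) = f.
Proof. by rewrite (@sc_vcomp_spec _ _ (simop 3 (vx [:: 0; 1; 1; 2]) f)); sc_eq. Qed.

Lemma sc_hcomp_assoc f g h : sc_htgt f = sc_hsrc g -> sc_htgt g = sc_hsrc h ->
  sc_hcomp (sc_hcomp f g) h = sc_hcomp f (sc_hcomp g h).
Proof.
move=> fg gh; have [w [Ef Eg]] := simplex3_hglue fg.
have compat : simop 1 (vx [:: 0; 3]) w = simop 1 (vx [:: 0; 1]) h.
  by rewrite -[RHS]/(sc_hsrc h) -gh -Eg; sc_eq.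
have [u [[Ew Eh] _]] := glue_last (ltn0Sn 2) compat.
have -> : f = simop 2 (vx [:: 0; 1; 2]) u by rewrite -Ef -Ew; simop_eq.
have -> : g = simop 2 (vx [:: 0; 2; 3]) u by rewrite -Eg -Ew; simop_eq.
by rewrite -Eh !sc_hcomp_simop.
Qed.

Lemma sc_vcomp_assoc f g h : sc_vtgt f = sc_vsrc g -> sc_vtgt g = sc_vsrc h ->
  sc_vcomp (sc_vcomp f g) h = sc_vcomp f (sc_vcomp g h).
Proof.
move=> fg gh; have [w [Eg Eh]] := simplex3_vglue gh.
have compat : simop 1 (vx [:: 0; 3]) w = simop 1 (vx [:: 1; 2]) f.
  by rewrite -[RHS]/(sc_vtgt f) fg -Eg; sc_eq.
have [u [[Ew Ef] _]] := glue_first (ltn0Sn 2) compat.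
have -> : g = simop 2 (vx [:: 1; 2; 4]) u by rewrite -Eg -Ew; simop_eq.
have -> : h = simop 2 (vx [:: 2; 3; 4]) u by rewrite -Eh -Ew; simop_eq.
by rewrite -Ef !sc_vcomp_simop.
Qed.

Lemma sc_Sq_boundary t b l r : sc_Sq t b l r ->
  [/\ sc_hsrc t = sc_vsrc l, sc_htgt t = sc_vsrc r,
      sc_hsrc b = sc_vtgt l & sc_htgt b = sc_vtgt r].
Proof. by case=> w [<- <- <- <-]; split; sc_eq. Qed.

Lemma sc_Sq_hid v : sc_Sq (sc_hid (sc_vsrc v)) (sc_hid (sc_vtgt v)) v v.
Proof. by exists (simop 3 (vx [:: 0; 1; 2; 2]) v); split; sc_eq. Qed.

Lemma sc_Sq_vid f : sc_Sq f f (sc_vid (sc_hsrc f)) (sc_vid (sc_htgt f)).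
Proof. by exists (simop 3 (vx [:: 0; 0; 1; 2]) f); split; sc_eq. Qed.

Lemma sc_Sq_determined t b l r (w : X 3) : sc_Sq t b l r ->
  simop 2 (vx [:: 0; 1; 2]) w = l -> simop 2 (vx [:: 0; 2; 3]) w = t ->
  simop 2 (vx [:: 1; 2; 3]) w = b /\ simop 2 (vx [:: 0; 1; 3]) w = r.
Proof.
case=> w' [<- <- El <-] E1 E2.
by rewrite (simplex3_eq_h (w := w) (w' := w')) // El.
Qed.

Lemma sc_Sq_determined_v t b l r (w : X 3) : sc_Sq t b l r ->
  simop 2 (vx [:: 1; 2; 3]) w = b -> simop 2 (vx [:: 0; 1; 3]) w = r ->
  simop 2 (vx [:: 0; 2; 3]) w = t /\ simop 2 (vx [:: 0; 1; 2]) w = l.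
Proof.
case=> w' [<- Eb <- Er] E1 E2.
by rewrite (simplex3_eq_v (w := w) (w' := w')) // ?Eb ?Er.
Qed.

Lemma sc_Sq_hcomp t b l r t' b' r' : sc_Sq t b l r -> sc_Sq t' b' r r' ->
  sc_Sq (sc_hcomp t t') (sc_hcomp b b') l r'.
Proof.
case=> w [Ht Hb Hl Hr] sq'.
have compat : simop 1 (vx [:: 0; 3]) w = simop 1 (vx [:: 0; 1]) t'.
  by rewrite -[RHS]/(sc_hsrc t'); have [-> _ _ _] := sc_Sq_boundary sq'; rewrite -Hr; sc_eq.
have [u [[Ew Et'] _]] := glue_last (ltn0Sn 2) compat.
have [Eb' Er'] := sc_Sq_determined (w := simop 3 (vx [:: 0; 1; 3; 4]) u) sq'
  ltac:(by rewrite -Hr -Ew; simop_eq) ltac:(by rewrite -Et'; simop_eq).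
have -> : t = simop 2 (vx [:: 0; 2; 3]) u by rewrite -Ht -Ew; simop_eq.
have -> : b = simop 2 (vx [:: 1; 2; 3]) u by rewrite -Hb -Ew; simop_eq.
have -> : l = simop 2 (vx [:: 0; 1; 2]) u by rewrite -Hl -Ew; simop_eq.
have -> : t' = simop 2 (vx [:: 0; 3; 4]) u by rewrite -Et'; simop_eq.
have -> : b' = simop 2 (vx [:: 1; 3; 4]) u by rewrite -Eb'; simop_eq.
have -> : r' = simop 2 (vx [:: 0; 1; 4]) u by rewrite -Er'; simop_eq.
rewrite !sc_hcomp_simop //.
by exists (simop 3 (vx [:: 0; 1; 2; 4]) u); split; simop_eq.
Qed.

Lemma sc_Sq_vcomp t m b l r l' r' : sc_Sq t m l r -> sc_Sq m b l' r' ->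
  sc_Sq t b (sc_vcomp l l') (sc_vcomp r r').
Proof.
move=> sq [w' [Hm Hb Hl' Hr']].
have compat : simop 1 (vx [:: 0; 3]) w' = simop 1 (vx [:: 1; 2]) r.
  by rewrite -[RHS]/(sc_vtgt r); have [_ _ _ <-] := sc_Sq_boundary sq; rewrite -Hm; sc_eq.
have [u [[Ew' Er] _]] := glue_first (ltn0Sn 2) compat.
have [Et El] := sc_Sq_determined_v (w := simop 3 (vx [:: 0; 1; 3; 4]) u) sq
  ltac:(by rewrite -Hm -Ew'; simop_eq) ltac:(by rewrite -Er; simop_eq).
have -> : t = simop 2 (vx [:: 0; 3; 4]) u by rewrite -Et; simop_eq.
have -> : l = simop 2 (vx [:: 0; 1; 3]) u by rewrite -El; simop_eq.
have -> : r = simop 2 (vx [:: 0; 1; 4]) u by rewrite -Er; simop_eq.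
have -> : b = simop 2 (vx [:: 2; 3; 4]) u by rewrite -Hb -Ew'; simop_eq.
have -> : l' = simop 2 (vx [:: 1; 2; 3]) u by rewrite -Hl' -Ew'; simop_eq.
have -> : r' = simop 2 (vx [:: 1; 2; 4]) u by rewrite -Hr' -Ew'; simop_eq.
rewrite !sc_vcomp_simop //.
by exists (simop 3 (vx [:: 0; 2; 3; 4]) u); split; simop_eq.
Qed.

Lemma sc_hom_from_O g : sc_hsrc g = scO -> g = sc_vid (sc_htgt g).
Proof.
move=> g_src.
have E : simop 3 (vx [:: 0; 0; 1; 2]) g = simop 3 (vx [:: 0; 1; 1; 2]) g.
  apply: (simplex3_eq_h); last by simop_eq.
  have -> : simop 2 (vx [:: 0; 1; 2]) (simop 3 (vx [:: 0; 0; 1; 2]) g) =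
            simop 2 (vx [:: 0; 0; 1]) (sc_hsrc g) by sc_eq.
  have -> : simop 2 (vx [:: 0; 1; 2]) (simop 3 (vx [:: 0; 1; 1; 2]) g) =
            simop 2 (vx [:: 0; 1; 1]) (sc_hsrc g) by sc_eq.
  by rewrite g_src /scO; simop_eq.
transitivity (simop 2 (vx [:: 0; 1; 3]) (simop 3 (vx [:: 0; 1; 1; 2]) g)); first by simop_eq.
by rewrite -E; sc_eq.
Qed.

Lemma sc_hom_to_O v : sc_vtgt v = scO -> v = sc_hid (sc_vsrc v).
Proof.
move=> v_tgt.
have E : simop 3 (vx [:: 0; 1; 2; 2]) v = simop 3 (vx [:: 0; 1; 1; 2]) v.
  apply: (simplex3_eq_v); last by simop_eq.
  have -> : simop 2 (vx [:: 1; 2; 3]) (simop 3 (vx [:: 0; 1; 2; 2]) v) =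
            simop 2 (vx [:: 0; 1; 1]) (sc_vtgt v) by sc_eq.
  have -> : simop 2 (vx [:: 1; 2; 3]) (simop 3 (vx [:: 0; 1; 1; 2]) v) =
            simop 2 (vx [:: 0; 0; 1]) (sc_vtgt v) by sc_eq.
  by rewrite v_tgt /scO; simop_eq.
transitivity (simop 2 (vx [:: 0; 2; 3]) (simop 3 (vx [:: 0; 1; 1; 2]) v)); first by simop_eq.
by rewrite -E; sc_eq.
Qed.

Lemma sc_O_hinitial a : exists f, [/\ sc_hsrc f = scO, sc_htgt f = a &
  forall g, sc_hsrc g = scO -> sc_htgt g = a -> g = f].
Proof.
exists (sc_vid a); split; last by move=> g /sc_hom_from_O Eg <-.
- rewrite /sc_hsrc /sc_vid simop_comp; try nat_mono_tac.
  by apply: (@simop_const_edge _ _ _ 0) => // -[|[|]].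
- by sc_eq.
Qed.

Lemma sc_O_vterminal a : exists v, [/\ sc_vsrc v = a, sc_vtgt v = scO &
  forall w, sc_vsrc w = a -> sc_vtgt w = scO -> w = v].
Proof.
exists (sc_hid a); split; last by move=> w <- /sc_hom_to_O.
- by sc_eq.
- rewrite /sc_vtgt /sc_hid simop_comp; try nat_mono_tac.
  by apply: (@simop_const_edge _ _ _ 1) => // -[|[|]].
Qed.

Definition sq_cat : squares_category :=
  SquaresCat sc_hid_src sc_hid_tgt sc_hcomp_src sc_hcomp_tgt sc_hcomp_idl sc_hcomp_idr
    sc_hcomp_assoc sc_vid_src sc_vid_tgt sc_vcomp_src sc_vcomp_tgt sc_vcomp_idl sc_vcomp_idr
    sc_vcomp_assoc sc_Sq_boundary sc_Sq_hid sc_Sq_vid sc_Sq_hcomp sc_Sq_vcomp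
    sc_O_hinitial sc_O_vterminal.

Let C := sq_cat.

Definition sq_of n (x : X n) : SqRaw C :=
  @MkSqRaw C
    (fun j k => if j < k <= n then simop 1 (vx [:: j; k]) x else scO)
    (fun j k => if j <= k < n then simop 2 (vx [:: j; k; k.+1]) x else sc_hid scO)
    (fun j k => if j < k <= n then simop 2 (vx [:: j; j.+1; k]) x else sc_vid scO).

Lemma sq_of_edge n (x : X n) j k : j <= k -> k <= n ->
  sobj (sq_of x) j k = simop 1 (vx [:: j; k]) x.
Proof.
move=> jk kn /=; case: ifP => // /negbT; rewrite negb_and -leqNgt kn orbF => kj.
have -> : k = j by lia.
by symmetry; apply: (@simop_const_edge _ _ _ j) => //; [lia | case=> [|[|]]].
Qed.

Lemma sq_of_valid n (x : X n) : sq_valid n (sq_of x).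
Proof.
split.
- split=> [j k /negbTE /= -> // | j k /andP[jk kn]].
  by rewrite !sq_of_edge //= ?jk ?kn; try lia; split; sc_eq.
- by move=> j k /negbTE /= ->.
- move=> j k /andP[jk kn].
  by rewrite !sq_of_edge //= ?jk ?kn; try lia; split; sc_eq.
- by move=> j k /negbTE /= ->.
- move=> j k /andP[jk kn] /=; rewrite !ifT; try lia.
  by exists (simop 3 (vx [:: j; j.+1; k; k.+1]) x); split; simop_eq.
Qed.

Lemma hpath_sq_of n (x : X n) a b c : a <= b -> b <= c -> c <= n ->
  hpath (shor (sq_of x) a) (sobj (sq_of x) a b) b (c - b) = simop 2 (vx [:: a; b; c]) x.
Proof.
move=> ab bc cn; rewrite sq_of_edge //; last exact: leq_trans bc cn.
move: cn; move: (c - b) (subnKC bc) => d <- {bc}.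
elim: d => [|d IH] bdn /=; first by rewrite addn0; sc_eq.
rewrite IH ?ifT; try lia.
by rewrite sc_hcomp_simop ?addnS //; lia.
Qed.

Lemma vpath_sq_of n (x : X n) a b c : a <= b -> b <= c -> c <= n ->
  vpath (fun t => sver (sq_of x) t c) (sobj (sq_of x) a c) a (b - a) =
  simop 2 (vx [:: a; b; c]) x.
Proof.
move=> ab bc cn; rewrite sq_of_edge //; last exact: leq_trans ab bc.
move: bc; move: (b - a) (subnKC ab) => d <- {ab}.
elim: d => [|d IH] adc /=; first by rewrite addn0; sc_eq.
rewrite IH ?ifT; try lia.
by rewrite sc_vcomp_simop ?addnS //; lia.
Qed.

Lemma sq_of_sact m n (theta : 'I_m.+1 -> 'I_n.+1) (x : X n) : monotone theta ->
  sq_of (sact X theta x) = sq_act (ord_fun theta) m (sq_of x).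
Proof.
move=> /nat_mono_ord_fun mono_theta; rewrite sact_simop {1}/sq_of /sq_act.
set T := ord_fun theta in mono_theta *; have [Tmono Tm] := mono_theta.
have Tn t : t <= m -> T t <= n by move=> tm; apply: leq_trans (Tmono _ _ tm _) Tm.
congr MkSqRaw;
  apply: functional_extensionality => j; apply: functional_extensionality => k;
  case: ifP => // /andP[jk km].
- have Tjk := Tmono j k (ltnW jk) km.
  by rewrite sq_of_edge //; [simop_eq | exact: Tn].
- by rewrite hpath_sq_of; [simop_eq | apply: Tmono; lia.. | apply: Tn].
- by rewrite vpath_sq_of; [simop_eq | apply: Tmono; lia.. | apply: Tn].
Qed.

Definition realizes n (x : X n) (A : SqRaw C) : Prop :=
  [/\ forall j k, j < k <= n -> simop 1 (vx [:: j; k]) x = sobj A j k,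
      forall j k, j <= k < n -> simop 2 (vx [:: j; k; k.+1]) x = shor A j k
    & forall j k, j < k <= n -> simop 2 (vx [:: j; j.+1; k]) x = sver A j k].

Lemma realizes_sq_of n (x : X n) : realizes x (sq_of x).
Proof. by split=> j k /= ->. Qed.

Lemma sq_of_realizes n (x : X n) A : sq_valid n A -> realizes x A -> sq_of x = A.
Proof.
case: A => o h v [[/= o_out _] /= h_out _ /= v_out _] [/= Eo Eh Ev]; rewrite /sq_of.
congr MkSqRaw; apply: functional_extensionality => j; apply: functional_extensionality => k.
- by case: ifP => [/Eo | /negbT/o_out].
- by case: ifP => [/Eh | /negbT/h_out].
- by case: ifP => [/Ev | /negbT/v_out].
Qed.

Lemma realizes_restrict m n (x : X n) A : m <= n -> realizes x A -> realizes (simop m id x) A.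
Proof.
move=> mn [Eo Eh Ev]; split=> j k jkm.
- by rewrite -Eo; [simop_eq | lia].
- by rewrite -Eh; [simop_eq | lia].
- by rewrite -Ev; [simop_eq | lia].
Qed.

Lemma realizes_inj n (x x' : X n) A : realizes x A -> realizes x' A -> x = x'.
Proof.
elim: n x x' => [|[|n] IH] x x' Rx Rx'.
- by rewrite (pt_unique x) (pt_unique x').
- have [Eo _ _] := Rx; have [Eo' _ _] := Rx'.
  transitivity (sobj A 0 1); first by rewrite -Eo //; simop_eq.
  by rewrite -Eo' //; simop_eq.
- apply: (glue_last_inj (ltn0Sn n)); first by apply: IH; exact: realizes_restrict.
  have [[_ Eh _] [_ Eh' _]] := (Rx, Rx').
  by rewrite Eh ?Eh' //; lia.
Qed.

Lemma realizes_cell N m (A : SqRaw C) (x : X m) j k : sq_valid N A -> j < k < N -> k < m ->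
  simop 2 (vx [:: j; j.+1; k]) x = sver A j k -> simop 2 (vx [:: j; k; k.+1]) x = shor A j k ->
  simop 2 (vx [:: j.+1; k; k.+1]) x = shor A j.+1 k /\
  simop 2 (vx [:: j; j.+1; k.+1]) x = sver A j k.+1.
Proof.
case=> _ _ _ _ cells jkN km El Et.
have [<- <-] := sc_Sq_determined (w := simop 3 (vx [:: j; j.+1; k; k.+1]) x) (cells j k jkN)
  ltac:(by rewrite -El; simop_eq) ltac:(by rewrite -Et; simop_eq).
by split; simop_eq.
Qed.

Lemma realizes_edge N (A : SqRaw C) : sq_valid N A -> 0 < N -> realizes (sobj A 0 1 : X 1) A.
Proof.
case=> [[o_out hom] _ vom _ _] N0; split=> j k /andP[jk k1].
- have [-> ->] : j = 0 /\ k = 1 by lia.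
  by simop_eq.
- have [-> ->] : j = 0 /\ k = 0 by lia.
  have [/= src tgt] := hom 0 0 ltac:(lia); rewrite o_out // in src.
  by rewrite (sc_hom_from_O src) tgt; sc_eq.
- have [-> ->] : j = 0 /\ k = 1 by lia.
  have [/= src tgt] := vom 0 1 ltac:(lia); rewrite o_out // in tgt.
  by rewrite (sc_hom_to_O tgt) src; sc_eq.
Qed.

Lemma realizes_last_column N (A : SqRaw C) n (x : X n.+2) : sq_valid N A -> n.+2 <= N ->
  realizes (simop n.+1 id x) A -> simop 2 (vx [:: 0; n.+1; n.+2]) x = shor A 0 n.+1 ->
  realizes x A.
Proof.
move=> validA nN [Eo Eh Ev] corner; have [[o_out hom] _ vom _ _] := validA.
have low m f : nat_mono m n.+1 f -> simop m f x = simop m f (simop n.+1 id x).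
  by move=> f_mono; rewrite simop_comp //; apply: nat_mono_id.
have left j : j < n.+1 -> simop 2 (vx [:: j; j.+1; n.+1]) x = sver A j n.+1.
  by move=> jn; rewrite low; [apply: Ev; lia | nat_mono_tac].
have top j : j <= n.+1 -> simop 2 (vx [:: j; n.+1; n.+2]) x = shor A j n.+1.
  elim: j => [|j IHj] jn //.
  by apply: (realizes_cell validA _ _ (left j jn) (IHj (ltnW jn))).1; lia.
have edge j : j < n.+2 -> simop 1 (vx [:: j; n.+2]) x = sobj A j n.+2.
  move=> jn; have [_ <-] := hom j n.+1 ltac:(lia).
  by rewrite -(top j) /=; [sc_eq | lia].
split=> j k /andP[jk kn].
- case: (ltnP k n.+2) => kn2; first by rewrite low; [apply: Eo; lia | nat_mono_tac].
  have -> : k = n.+2 by lia.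
  by apply: edge; lia.
- case: (ltnP k n.+1) => kn1; first by rewrite low; [apply: Eh; lia | nat_mono_tac].
  have -> : k = n.+1 by lia.
  by apply: top; lia.
- case: (ltnP k n.+2) => kn2; first by rewrite low; [apply: Ev; lia | nat_mono_tac].
  have -> : k = n.+2 by lia.
  case: (ltnP j n.+1) => jn.
    by apply: (realizes_cell validA _ _ (left j jn) (top j (ltnW jn))).2; lia.
  have -> : j = n.+1 by lia.
  have [/= src tgt] := vom n.+1 n.+2 ltac:(lia); rewrite o_out ?ltnn // in tgt.
  by rewrite (sc_hom_to_O tgt) src -edge //; sc_eq.
Qed.

Lemma realizes_exists N (A : SqRaw C) n : sq_valid N A -> n <= N -> exists x : X n, realizes x A.
Proof.
move=> validA; elim: n => [|[|n] IH] nN.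
- by exists pt; split=> j k; lia.
- by exists (sobj A 0 1); exact: realizes_edge validA nN.
- have [y [Eo Eh Ev]] := IH (ltnW nN).
  have compat : simop 1 (vx [:: 0; n.+1]) y = simop 1 (vx [:: 0; 1]) (shor A 0 n.+1).
    have [[_ hom] _ _ _ _] := validA; have [src _] := hom 0 n.+1 ltac:(lia).
    by rewrite Eo -?src //; lia.
  have [x [[Exy Ex0] _]] := glue_last (ltn0Sn n) compat.
  by exists x; apply: realizes_last_column validA nN _ Ex0; rewrite Exy.
Qed.

Lemma sq_of_inj n : injective (@sq_of n).
Proof.
move=> x x' E; apply: (realizes_inj (A := sq_of x)); first exact: realizes_sq_of.
by rewrite E; exact: realizes_sq_of.
Qed.

Lemma sq_validP n (A : SqRaw C) : sq_valid n A <-> exists x : X n, sq_of x = A.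
Proof.
split=> [validA | [x <-]]; last exact: sq_of_valid.
have [x Rx] := realizes_exists validA (leqnn n).
by exists x; exact: sq_of_realizes.
Qed.

Lemma sq_cat_iso : iso_to_SqCat X sq_cat.
Proof.
by exists sq_of; split=> [n | n A | m n theta mono_theta x];
  [exact: sq_of_inj | exact: sq_validP | exact: sq_of_sact].
Qed.

End SquaresCategory.
End TwoSegal.
End Simplicial.

Theorem corollary3p7 (X : sSet) :
  two_segal X -> reduced X -> exists C : squares_category, iso_to_SqCat X C.
Proof.
by move=> segX [pt pt_unique]; exists (sq_cat segX pt_unique); exact: sq_cat_iso.
Qed.
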